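(* Consider a symmetric two-player game $(X,\pi)$ with compact action set $X$ and payoff function of the form $\pi(x,y)=f(x)+g(y)+a(x,y)$ for some continuous functions $f,g:X\to\mathbb{R}$ and a symmetric function $a:X\times X\to\mathbb{R}$ (i.e. $a(x,y)=a(y,x)$ for all $x,y\in X$). Then imitation is essentially unbeatable.
   Context: $\pi(x,y)$ is the payoff of the player choosing $x$ against $y$ (assumed bounded). Relative payoff: $\Delta(x,y)=\pi(x,y)-\pi(y,x)$, and $\hat\Delta:=\max_{x,y\in X}\Delta(x,y)$. Imitate-the-best: given initial $y_0\in X$ and any opponent sequence $(x_t)_{t\ge0}$ in $X$, $y_t=x_{t-1}$ if $\Delta(x_{t-1},y_{t-1})>0$ and $y_t=y_{t-1}$ otherwise. Imitation is essentially unbeatable if for every $y_0\in X$ and every sequence $(x_t)$, $\limsup_{T\to\infty}\sum_{t=0}^T\Delta(x_t,y_t)\le\hat\Delta$. *)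

From HB Require Import structures.
From mathcomp Require Import all_boot all_order all_algebra.
From mathcomp Require Import all_classical all_reals all_analysis.
Set Implicit Arguments. Unset Strict Implicit. Unset Printing Implicit Defensive.
Import Order.TTheory GRing.Theory Num.Theory.
Local Open Scope ring_scope.
Local Open Scope classical_set_scope.

Section Imitation.
Variables (R : realType) (X : Type).

Definition relpay (pi : X -> X -> R) (x y : X) : R := pi x y - pi y x.

(* hat Delta = max_{x,y} Delta(x,y), rendered as the supremum (it is a max
   whenever the max exists, which is the paper's setting) *)
Definition hatDelta (pi : X -> X -> R) : R :=
  sup [set relpay pi x y | x in [set: X] & y in [set: X]].

Fixpoint imitate (pi : X -> X -> R) (y0 : X) (x : nat -> X) (t : nat) : X :=
  match t with
  | 0 => y0
  | t'.+1 => let yp := imitate pi y0 x t' in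
             if 0 < relpay pi (x t') yp then x t' else yp
  end.

Definition essentially_unbeatable (pi : X -> X -> R) : Prop :=
  forall (y0 : X) (x : nat -> X),
    (limn_esup (fun T : nat =>
       ((\sum_(0 <= t < T.+1) relpay pi (x t) (imitate pi y0 x t))%:E))
     <= (hatDelta pi)%:E)%E.
End Imitation.

(* With [pi x y = f x + g y + a x y] and [a] symmetric, the relative payoff is a
   potential difference, [relpay pi u v = h u - h v] with [h := f - g].  Each
   imitation step gains at most the increase of [h] along the imitator's path
   (it only switches when that increase is exactly the current relative payoff,
   and otherwise the payoff is nonpositive), so the cumulative relative payoff
   telescopes to at most [h y_T - h y_0 = relpay pi y_T y_0 <= hatDelta pi]. *)
From HB Require Import structures.
From mathcomp Require Import all_boot all_order all_algebra.
From mathcomp Require Import all_classical all_reals all_analysis.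
From mathcomp Require Import lra.
Import Order.TTheory GRing.Theory Num.Theory numFieldNormedType.Exports.
Local Open Scope ring_scope.
Local Open Scope classical_set_scope.

Lemma relpay_additive_symmetric (R : realType) (X : Type)
    (pi : X -> X -> R) (f g : X -> R) (a : X -> X -> R) :
  (forall x y, a x y = a y x) ->
  (forall x y, pi x y = f x + g y + a x y) ->
  forall u v, relpay pi u v = (f u - g u) - (f v - g v).
Proof. by move=> asym hpi u v; rewrite /relpay !hpi asym; lra. Qed.
Arguments relpay_additive_symmetric {R X pi f g a}.

Lemma relpay_le_hatDelta (R : realType) (X : Type) (pi : X -> X -> R) (M : R) :
  (forall x y, `|pi x y| <= M) -> forall u v, relpay pi u v <= hatDelta pi.
Proof.
move=> hM u v; apply: ub_le_sup; last by exists u => //; exists v.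
exists (M + M) => _ [w _ [z _ <-]]; rewrite /relpay.
by have := hM w z; have := hM z w; rewrite !ler_norml; lra.
Qed.
Arguments relpay_le_hatDelta {R X pi M}.

Lemma limn_esup_le_cst (R : realType) (u : nat -> R) (c : R) :
  (forall n, u n <= c) -> (limn_esup (fun n => (u n)%:E) <= c%:E)%E.
Proof.
move=> uc; rewrite limn_esup_lim; apply: lime_le; first exact: is_cvg_esups.
by apply: nearW => n; apply: ge_ereal_sup => _ [m _ <-]; rewrite lee_fin.
Qed.

Section PotentialImitation.
Variables (R : realType) (X : Type) (pi : X -> X -> R) (h : X -> R).
Hypothesis relpay_potential : forall u v, relpay pi u v = h u - h v.
Variables (y0 : X) (x : nat -> X).

Local Notation y := (imitate pi y0 x).

Lemma relpay_imitate_le_increment t :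
  relpay pi (x t) (y t) <= h (y t.+1) - h (y t).
Proof.
rewrite /= !relpay_potential; case: ifP => [_|/negbT]; first lra.
by rewrite -leNgt; lra.
Qed.

Lemma sum_relpay_imitate_le T :
  \sum_(0 <= t < T) relpay pi (x t) (y t) <= relpay pi (y T) y0.
Proof.
rewrite relpay_potential; elim: T => [|T IH]; first by rewrite big_geq // subrr.
by rewrite big_nat_recr //=; have := relpay_imitate_le_increment T; lra.
Qed.

End PotentialImitation.
Arguments sum_relpay_imitate_le {R X pi} h.

Theorem corollary3 (R : realType) (X : topologicalType)
  (pi : X -> X -> R) (f g : X -> R) (a : X -> X -> R) :
  compact [set: X] ->
  continuous f -> continuous g ->
  (forall x y, a x y = a y x) ->
  (forall x y, pi x y = f x + g y + a x y) ->
  (exists M : R, forall x y, `|pi x y| <= M) ->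
  essentially_unbeatable pi.
Proof.
(* Compactness and continuity only make [hatDelta pi] a maximum; the bound on
   [pi] already makes it a finite supremum, which is all the argument uses. *)
move=> _ _ _ asym hpi [M hM] y0 x; apply: limn_esup_le_cst => T.
have hpot := relpay_additive_symmetric asym hpi.
apply: (le_trans (sum_relpay_imitate_le (fun z => f z - g z) hpot y0 x T.+1)).
exact: relpay_le_hatDelta hM _ _.
Qed.
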